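(* Let $\boldsymbol\Phi':=\mathbf wx_N$ (apply $\mathbf w$, then multiply by $x_N$). Then $\boldsymbol\Phi'=s^{N-1}\Xi_1\boldsymbol\Phi$, and for every $v\in\mathbb N_0^N$ and $\mathbb T\in\mathrm{Tab}_\lambda$, $$P_{v,\mathbb T}\boldsymbol\Phi'=s^{N-1+\mathrm{CT}_{\mathbb T}[r_v[1]]}q^{v_1}P_{v,\mathbb T}\boldsymbol\Phi .$$
   Context: $N\ge2$, $q,s$ indeterminates, $K=\mathbb C(q,s)$. Operators act on the right, composed left to right. $\mathcal H_N(s)$ is generated by $T_1,\dots,T_{N-1}$ with $(T_i+1)(T_i-s)=0$ and braid relations. $\lambda$ a partition of $N$ (French convention, rows numbered bottom to top); $\mathrm{Tab}_\lambda$ = reverse standard tableaux (bijective fillings by $1,\dots,N$ strictly decreasing left to right in rows and bottom to top in columns); $\mathrm{CT}_{\mathbb T}[i]$ = column minus row of the cell of $i$; $\mathbb T^{(i,j)}$ exchanges $i,j$. $V_\lambda$ has basis $\mathrm{Tab}_\lambda$, right action $\mathbb TT_i=s\mathbb T$ if $i,i+1$ share a row, $-\mathbb T$ if they share a column, and if $i$ is in a higher row than $i+1$, with $m=\mathrm{CT}_{\mathbb T}[i+1]-\mathrm{CT}_{\mathbb T}[i]>0$, $\mathbb TT_i=\frac{s-1}{1-s^m}\mathbb T+\frac{s(1-s^{m+1})(1-s^{m-1})}{(1-s^m)^2}\mathbb T^{(i,i+1)}$; remaining case determined by this formula for $\mathbb T^{(i,i+1)}$ and the quadratic relation. $\mathcal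 M_\lambda=K[x_1,\dots,x_N]\otimes V_\lambda$; $(p\otimes u)\mathbf T_i=(1-s)\frac{x_{i+1}(p-p^{s_i})}{x_i-x_{i+1}}\otimes u+p^{s_i}\otimes uT_i$ ($p^{s_i}$: $x_i,x_{i+1}$ exchanged), $(p\otimes u)\mathbf w=p(qx_N,x_1,\dots,x_{N-1})\otimes uT_1\cdots T_{N-1}$, $\mathbf T_i^{-1}=s^{-1}(\mathbf T_i+1-s)$, $\Xi_i=s^{i-N}\mathbf T_{i-1}^{-1}\cdots\mathbf T_1^{-1}\mathbf w\mathbf T_{N-1}\cdots\mathbf T_i$, $\boldsymbol\Phi=\mathbf T_1^{-1}\cdots\mathbf T_{N-1}^{-1}x_N$. For $v\in\mathbb N_0^N$, $r_v[i]=\#\{j\le i:v_j\ge v_i\}+\#\{j>i:v_j>v_i\}$. $P_{v,\mathbb T}$ denotes the vector-valued nonsymmetric Macdonald polynomial: the simultaneous eigenfunction of the $\Xi_i$ in $\mathcal M_\lambda$ with $P_{v,\mathbb T}\Xi_i=q^{v_i}s^{\mathrm{CT}_{\mathbb T}[r_v[i]]}P_{v,\mathbb T}$ for all $i$. *)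

From HB Require Import structures.
From mathcomp Require Import all_boot all_order all_algebra.
From mathcomp Require Import reals Rstruct complex fraction.
From mathcomp Require Import mpoly.
From Stdlib Require Import ClassicalEpsilon.
Set Implicit Arguments. Unset Strict Implicit. Unset Printing Implicit Defensive.
Import Order.TTheory GRing.Theory Num.Theory.
Local Open Scope ring_scope.

(* The field K = C(q,s): fraction field of C[q][s], C = R[i] the complex numbers. *)
Notation CC := (Rdefinitions.R[i]).
Notation Kpoly := {poly {poly CC}}.
Notation K := {fraction Kpoly}.
Definition qK : K := FracField.tofrac ((('X : {poly CC})%:P : Kpoly)).
Definition sK : K := FracField.tofrac ('X : Kpoly).

Section HeckeModule.
Variables (N : nat) (lam : seq nat).

(* lam is a partition of N (rows listed bottom to top, French convention). *)
Definition is_partition : bool :=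
  [&& sorted geq lam, all (fun k => 0 < k)%N lam & sumn lam == N].

(* cells (row, column), 0-based, row 0 = bottom row *)
Definition in_shape (rc : nat * nat) : bool :=
  (rc.1 < size lam)%N && (rc.2 < nth 0%N lam rc.1)%N.

(* A filling: entry e : 'I_N (standing for the number e+1) |-> its cell (row, col). *)
Definition filling := {ffun 'I_N -> 'I_N * 'I_N}.
Definition cellN (f : filling) (e : 'I_N) : nat * nat := (val (f e).1, val (f e).2).

Definition is_rstab (f : filling) : bool :=
  [&& [forall e1, forall e2, (cellN f e1 == cellN f e2) ==> (e1 == e2)],
      [forall e, in_shape (cellN f e)],
      [forall r : 'I_N, forall c : 'I_N,
          in_shape (val r, val c) ==> [exists e, cellN f e == (val r, val c)]],
      [forall e1, forall e2,
          (((cellN f e1).1 == (cellN f e2).1) && ((cellN f e1).2 < (cellN f e2).2)%N)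
          ==> (e2 < e1)%N] &
      [forall e1, forall e2,
          (((cellN f e1).2 == (cellN f e2).2) && ((cellN f e1).1 < (cellN f e2).1)%N)
          ==> (e2 < e1)%N]].

Definition tab := {f : filling | is_rstab f}.

(* row / column / content of the (1-based) entry k in T *)
Definition rowT (T : tab) (k : nat) : nat :=
  if insub k.-1 is Some e then (cellN (val T) e).1 else 0%N.
Definition colT (T : tab) (k : nat) : nat :=
  if insub k.-1 is Some e then (cellN (val T) e).2 else 0%N.
Definition CT (T : tab) (k : nat) : int := (colT T k)%:Z - (rowT T k)%:Z.

(* the filling T^{(k,k+1)} (1-based entries k, k+1 exchanged) *)
Definition swapf (f : filling) (k : nat) : filling :=
  [ffun e : 'I_N => f (insubd e (if val e == k.-1 then k
                                  else if val e == k then k.-1 else val e))].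

Definition aco (m : int) : K := (sK - 1) / (1 - sK ^ m).
Definition bco (m : int) : K :=
  sK * (1 - sK ^ (m + 1)) * (1 - sK ^ (m - 1)) / (1 - sK ^ m) ^+ 2.

(* coefficient of U in  T T_k  (right action of the Hecke generator T_k on V_lambda) *)
Definition hcoef (k : nat) (T U : tab) : K :=
  let r1 := rowT T k in let r2 := rowT T k.+1 in
  let c1 := colT T k in let c2 := colT T k.+1 in
  if r1 == r2 then (if U == T then sK else 0)
  else if c1 == c2 then (if U == T then -1 else 0)
  else if (r2 < r1)%N then
    let m := CT T k.+1 - CT T k in
    (if U == T then aco m else 0) + (if val U == swapf (val T) k then bco m else 0)
  else
    (* remaining case: determined by the formula for T' = T^{(k,k+1)}
       (T' T_k = a T' + b T) and the quadratic relation *)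
    let m' := CT T k - CT T k.+1 in
    let a := aco m' in let b := bco m' in
    (if U == T then sK - 1 - a else 0)
    + (if val U == swapf (val T) k then ((sK - 1 - a) * a + sK) / b else 0).

(* V_lambda: vectors = coordinates on the basis Tab_lambda *)
Definition Vl := {ffun tab -> K}.
Definition deltaV (T : tab) : Vl := [ffun U => (U == T)%:R].
Definition heckeV (k : nat) (u : Vl) : Vl := [ffun U => \sum_T u T * hcoef k T U].

(* K[x_1..x_N]; x_j is 'X_(j-1) *)
Notation Pol := {mpoly K[N]}.
Definition Xn (j : nat) : Pol := if insub j is Some o then 'X_o else 0.
Definition tsw (k : nat) (i : 'I_N) : 'I_N :=
  insubd i (if val i == k.-1 then k else if val i == k then k.-1 else val i).
(* p^{s_k}: x_k and x_{k+1} exchanged *)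
Definition ssub (k : nat) (p : Pol) : Pol := p \mPo [tuple 'X_(tsw k i) | i < N].
Definition wsub (p : Pol) : Pol :=
  p \mPo [tuple (if val i == 0%N then qK *: Xn N.-1 else Xn (val i).-1) | i < N].
(* (1-s) x_{k+1} (p - p^{s_k}) / (x_k - x_{k+1}) : the unique polynomial quotient *)
Definition ddterm (k : nat) (p : Pol) : Pol :=
  epsilon (inhabits 0) (fun r : Pol =>
    r * (Xn k.-1 - Xn k) = (1 - sK) *: (Xn k * (p - ssub k p))).

(* M_lambda = K[x] (x) V_lambda; m = sum_T m(T) (x) T *)
Definition Mod := {ffun tab -> Pol}.
Definition liftV (F : Vl -> Vl) (m : Mod) : Mod :=
  [ffun U => \sum_T F (deltaV T) U *: m T].
Definition mapM (g : Pol -> Pol) (m : Mod) : Mod := [ffun U => g (m U)].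
Definition scaleM (c : K) (m : Mod) : Mod := [ffun U => c *: m U].

(* operators on M_lambda (acting on the right, m |-> m A) *)
Definition bT (k : nat) (m : Mod) : Mod :=
  [ffun U => ddterm k (m U) + liftV (heckeV k) (mapM (ssub k) m) U].
Definition bTinv (k : nat) (m : Mod) : Mod :=
  [ffun U => sK^-1 *: (bT k m U + (1 - sK) *: m U)].
Definition bw (m : Mod) : Mod :=
  liftV (fun u => foldl (fun u k => heckeV k u) u (iota 1 N.-1)) (mapM wsub m).
Definition mulxN (m : Mod) : Mod := [ffun U => Xn N.-1 * m U].

(* Xi_i = s^{i-N} T_{i-1}^{-1} ... T_1^{-1} w T_{N-1} ... T_i  (composed left to right) *)
Definition Xi (i : nat) (m : Mod) : Mod :=
  let m1 := foldl (fun m k => bTinv k m) m (rev (iota 1 i.-1)) in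
  let m2 := bw m1 in
  let m3 := foldl (fun m k => bT k m) m2 (rev (iota i (N - i))) in
  scaleM (sK ^ (i%:Z - N%:Z)) m3.

Definition Phi (m : Mod) : Mod := mulxN (foldl (fun m k => bTinv k m) m (iota 1 N.-1)).
Definition Phi' (m : Mod) : Mod := mulxN (bw m).

(* v in N_0^N as v : 'I_N -> nat; vnat v j = v_{j+1} *)
Definition vnat (v : 'I_N -> nat) (j : nat) : nat := if insub j is Some o then v o else 0%N.
(* r_v[i], i 1-based *)
Definition rv (v : 'I_N -> nat) (i : nat) : nat :=
  (#|[pred j : 'I_N | (j < i)%N && (vnat v i.-1 <= v j)%N]|
   + #|[pred j : 'I_N | (i <= j)%N && (vnat v i.-1 < v j)%N]|)%N.

End HeckeModule.

From HB Require Import structures.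
From mathcomp Require Import all_boot all_order all_algebra.
From mathcomp Require Import reals Rstruct complex fraction.
From mathcomp Require Import mpoly.
From mathcomp Require Import ring zify.
From Stdlib Require Import ClassicalEpsilon.
Import Order.TTheory GRing.Theory Num.Theory.
Local Open Scope ring_scope.
Set Implicit Arguments. Unset Strict Implicit. Unset Printing Implicit Defensive.

(* Composed left to right, Xi_1 = s^{1-N} w T_{N-1} ... T_1 followed by
   Phi = T_1^{-1} ... T_{N-1}^{-1} x_N is s^{1-N} w x_N = s^{1-N} Phi', and the
   eigenvalue of Xi_1 on P_{v,T} then gives the second identity.  The content is
   that s^{-1} (T_k + 1 - s) really inverts T_k on M_lambda, i.e. the quadratic
   relation (T_k + 1)(T_k - s) = 0.  Writing T_k = D_k + (s_k (x) T_k) with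
   D_k p = (1 - s) x_{k+1} (p - p^{s_k}) / (x_k - x_{k+1}), it follows from
   D_k^2 = (s - 1) D_k, D_k (p^{s_k}) + (D_k p)^{s_k} = (1 - s) (p - p^{s_k}) and
   the quadratic relation on V_lambda.  The latter is checked on the pairs
   {T, T^{(k,k+1)}}: when k and k+1 share neither a row nor a column, exchanging
   them gives again a reverse standard tableau, and their content difference is
   at least 2, so the off-diagonal coefficient does not vanish. *)

Lemma if_mul_nat (R : ringType) (b : bool) (a : R) : (if b then a else 0) = a * b%:R.
Proof. by case: b; rewrite ?mulr1 ?mulr0. Qed.

Lemma sum_delta_mul (R : ringType) (I : finType) (T : I) (F : I -> R) :
  \sum_U (U == T)%:R * F U = F T.
Proof.
rewrite (bigD1 T) //= eqxx mul1r big1 ?addr0 // => U /negbTE ->.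
by rewrite mul0r.
Qed.

Section QuadraticRelation.
Variables (R : fieldType) (s : R) (I : finType) (h : I -> I -> R).

Definition quadratic_at (T : I) : Prop :=
  forall W, \sum_U h T U * h U W = (s - 1) * h T W + s * (W == T)%:R.

Lemma quadratic_diagonal T a :
  (forall U, h T U = a * (U == T)%:R) -> a * a = (s - 1) * a + s -> quadratic_at T.
Proof.
move=> hT ha W.
rewrite (eq_bigr (fun U => a * ((U == T)%:R * h U W))); last first.
  by move=> U _; rewrite hT mulrA.
rewrite -mulr_sumr sum_delta_mul !hT.
by case: (W == T); rewrite ?mulr1 ?mulr0 ?addr0 // ha.
Qed.

Lemma quadratic_two_terms T T' a b a' b' : T' != T ->
  (forall U, h T U = a * (U == T)%:R + b * (U == T')%:R) ->
  (forall U, h T' U = a' * (U == T')%:R + b' * (U == T)%:R) ->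
  a * a + b * b' = (s - 1) * a + s -> a * b + b * a' = (s - 1) * b ->
  quadratic_at T.
Proof.
move=> hne hT hT' e1 e2 W.
rewrite (eq_bigr (fun U => a * ((U == T)%:R * h U W) + b * ((U == T')%:R * h U W)));
  last by move=> U _; rewrite hT mulrDl !mulrA.
rewrite big_split /= -!mulr_sumr !sum_delta_mul hT hT'.
have hne' : (T == T') = false by rewrite eq_sym (negbTE hne).
have [->|hWT] := eqVneq W T.
  rewrite hne' /=; apply: (@eq_trans _ _ (a * a + b * b')); first ring.
  by rewrite e1; ring.
have [_|hWT'] := eqVneq W T'; last by rewrite /=; ring.
rewrite /=; apply: (@eq_trans _ _ (a * b + b * a')); first ring.
by rewrite e2; ring.
Qed.

(* The row of T' is the one forced by the row of T and the quadratic relation;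
   this is the "remaining case" of the action on V_lambda. *)
Lemma quadratic_pair T T' a b : T' != T -> b != 0 ->
  (forall U, h T U = a * (U == T)%:R + b * (U == T')%:R) ->
  (forall U, h T' U = (s - 1 - a) * (U == T')%:R
                      + ((s - 1 - a) * a + s) / b * (U == T)%:R) ->
  quadratic_at T /\ quadratic_at T'.
Proof.
move=> hne hb hT hT'; split.
  by apply: (quadratic_two_terms hne hT hT'); [field | ring].
have hne' : T != T' by rewrite eq_sym.
apply: (quadratic_two_terms hne' hT' hT); last by ring.
by field.
Qed.

End QuadraticRelation.

Lemma bcoef_neq0 (F : fieldType) (t : F) :
  t != 0 -> (forall n, (0 < n)%N -> t ^+ n != 1) ->
  forall m : int, (1 < m)%R ->
  t * (1 - t ^ (m + 1)) * (1 - t ^ (m - 1)) / (1 - t ^ m) ^+ 2 != 0.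
Proof.
move=> t0 t_nroot [n|//] /= n_gt1.
have -> : (n%:Z + 1 = n.+1%:Z)%R by rewrite -addn1 PoszD.
have -> : (n%:Z - 1 = n.-1%:Z)%R by rewrite predn_int //; lia.
have sub_neq0 j : (0 < j)%N -> 1 - t ^ (Posz j) != 0.
  by move=> j_gt0; rewrite subr_eq0 eq_sym; apply: t_nroot.
rewrite !mulf_neq0 ?invr_neq0 ?expf_neq0 ?sub_neq0 //; lia.
Qed.

Lemma tofracX_neq0 (R : idomainType) : FracField.tofrac ('X : {poly R}) != 0.
Proof. by rewrite tofrac_eq0 polyX_eq0. Qed.

Lemma tofracX_expn_neq1 (R : idomainType) n :
  (0 < n)%N -> FracField.tofrac ('X : {poly R}) ^+ n != 1.
Proof.
move=> n_gt0; rewrite -tofracXn -tofrac1 tofrac_eq.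
apply/negP => /eqP eXn; have := size_polyXn R n.
by rewrite eXn size_poly1 => -[n0]; rewrite -n0 in n_gt0.
Qed.

Lemma sK_neq0 : sK != 0. Proof. exact: tofracX_neq0. Qed.
Lemma sK_expn_neq1 n : (0 < n)%N -> sK ^+ n != 1. Proof. exact: tofracX_expn_neq1. Qed.

Section RStab.
Variables (N : nat) (lam : seq nat) (f : filling N).
Hypothesis f_rstab : is_rstab lam f.

Lemma rstab_cell_inj a b : cellN f a = cellN f b -> a = b.
Proof.
case/and5P: f_rstab => /forallP inj _ _ _ _ e.
by have /forallP /(_ b) /implyP /(_ (introT eqP e)) /eqP := inj a.
Qed.

Lemma rstab_in_shape a : in_shape lam (cellN f a).
Proof. by case/and5P: f_rstab => _ /forallP. Qed.

Lemma rstab_cell_onto (r c : 'I_N) :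
  in_shape lam (val r, val c) -> exists e, cellN f e = (val r, val c).
Proof.
case/and5P: f_rstab => _ _ /forallP onto _ _ rc_in.
have /forallP /(_ c) /implyP /(_ rc_in) /existsP [e /eqP e_rc] := onto r.
by exists e.
Qed.

Lemma rstab_row_decr a b : (cellN f a).1 = (cellN f b).1 ->
  ((cellN f a).2 < (cellN f b).2)%N -> (b < a)%N.
Proof.
case/and5P: f_rstab => _ _ _ /forallP row _ e1 e2.
by have /forallP /(_ b) /implyP := row a; apply; rewrite e1 eqxx e2.
Qed.

Lemma rstab_col_decr a b : (cellN f a).2 = (cellN f b).2 ->
  ((cellN f a).1 < (cellN f b).1)%N -> (b < a)%N.
Proof.
case/and5P: f_rstab => _ _ _ _ /forallP col e1 e2.
by have /forallP /(_ b) /implyP := col a; apply; rewrite e1 eqxx e2.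
Qed.

End RStab.

Section Adjacent.
Variables (N k : nat).
Hypotheses (k_gt0 : (0 < k)%N) (k_ltN : (k < N)%N).

(* Entry k of a tableau is stored at index k.-1 of 'I_N, entry k+1 at index k. *)
Let predk_ltN : (k.-1 < N)%N. Proof. exact: leq_ltn_trans (leq_pred k) k_ltN. Qed.
Let ik : 'I_N := Ordinal predk_ltN.
Let ik1 : 'I_N := Ordinal k_ltN.

Lemma tsw_val (e : 'I_N) : val (tsw k e) =
  if val e == k.-1 then k else if val e == k then k.-1 else val e.
Proof.
rewrite /tsw val_insubd; case: ifP => //.
case: eqP => _; first by rewrite k_ltN.
case: eqP => _; first by rewrite predk_ltN.
by rewrite ltn_ord.
Qed.

Lemma tswK : involutive (@tsw N k).
Proof.
move=> e; apply: val_inj; rewrite !tsw_val.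
have := prednK k_gt0; move: (val e) (k.-1) => x k' kE.
have [->|x_neq] := eqVneq x k'; first by rewrite eqxx ifF //; apply/eqP; lia.
have [->|x_neq'] := eqVneq x k; first by rewrite eqxx.
by rewrite (negbTE x_neq) (negbTE x_neq').
Qed.

Lemma tsw_ik : tsw k ik = ik1.
Proof. by apply: val_inj; rewrite tsw_val eqxx. Qed.

Lemma tsw_ik1 : tsw k ik1 = ik.
Proof. by rewrite -tsw_ik tswK. Qed.

Lemma tsw_id (e : 'I_N) : e != ik -> e != ik1 -> tsw k e = e.
Proof.
rewrite -!(inj_eq val_inj) /= => /negbTE e_neq /negbTE e_neq'.
by apply: val_inj; rewrite tsw_val e_neq e_neq'.
Qed.

Lemma ik_neq_ik1 : ik != ik1.
Proof. by rewrite -(inj_eq val_inj) /=; apply/eqP; lia. Qed.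

Lemma tsw_cases (e : 'I_N) :
  (val e = k.-1 /\ val (tsw k e) = k) \/ (val e = k /\ val (tsw k e) = k.-1) \/
  (val e <> k.-1 /\ val e <> k /\ val (tsw k e) = val e).
Proof.
rewrite tsw_val.
have [e_eq|e_neq] := eqVneq (val e) k.-1; first by left.
have [e_eq'|e_neq'] := eqVneq (val e) k; first by right; left.
by right; right; split; [apply/eqP | split; [apply/eqP |]].
Qed.

Section DividedDifference.
Variables (R : fieldType) (s : R).
Local Notation Pol := {mpoly R[N]}.
Local Notation swapX := (comp_mpoly [tuple ('X_(tsw k i) : Pol) | i < N]).

(* Over K with s = sK, swapX, Xvar and divdiff are convertible to ssub, Xn and
   ddterm; bT_hecke_op relies on this. *)
Definition Xvar (j : nat) : Pol := if insub j is Some o then 'X_o else 0.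

Definition divdiff (p : Pol) : Pol :=
  epsilon (inhabits 0) (fun r : Pol =>
    r * (Xvar k.-1 - Xvar k) = (1 - s) *: (Xvar k * (p - swapX p))).

Lemma swapX_X i : swapX 'X_i = 'X_(tsw k i).
Proof. by rewrite comp_mpolyXU -tnth_nth tnth_map tnth_ord_tuple. Qed.

Lemma swapXK : involutive swapX.
Proof.
elim/mpolyind => [|c m p _ _ IH]; first by rewrite !comp_mpoly0.
suff swapXXm : swapX (swapX 'X_[m]) = 'X_[m] by rewrite !comp_mpolyD !comp_mpolyZ IH swapXXm.
rewrite mpolyXE_id !rmorph_prod /=; apply: eq_bigr => i _.
by rewrite !rmorphXn /= !swapX_X tswK.
Qed.

Let dX : Pol := 'X_ik - 'X_ik1.

Lemma dX_neq0 : dX != 0.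
Proof.
apply/eqP => /(congr1 (mcoeff U_(ik))).
rewrite mcoeffB !mcoeffXU eqxx eq_sym (negbTE ik_neq_ik1) mcoeff0 subr0.
by move/eqP; rewrite oner_eq0.
Qed.

Lemma swapX_dX : swapX dX = - dX.
Proof. by rewrite comp_mpolyB !swapX_X tsw_ik tsw_ik1 opprB. Qed.

Let dX_dvd (p : Pol) := exists r, r * dX = p - swapX p.

Let dX_dvd1 : dX_dvd 1. Proof. by exists 0; rewrite comp_mpoly1 mul0r subrr. Qed.

Let dX_dvdM p q : dX_dvd p -> dX_dvd q -> dX_dvd (p * q).
Proof.
move=> [rp ep] [rq eq]; exists (rp * q + swapX p * rq).
by rewrite rmorphM mulrDl -mulrA (mulrC q) mulrA ep -mulrA eq; ring.
Qed.

Let dX_dvdX i : dX_dvd 'X_i.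
Proof.
rewrite /dX_dvd swapX_X.
have [->|i_neq] := eqVneq i ik; first by exists 1; rewrite tsw_ik mul1r.
have [->|i_neq'] := eqVneq i ik1; first by exists (-1); rewrite tsw_ik1 mulN1r opprB.
by exists 0; rewrite tsw_id // mul0r subrr.
Qed.

(* Every p - p^{s_k} is divisible by x_k - x_{k+1}, so divdiff picks the genuine quotient. *)
Lemma dX_dvd_sub_swapX p : exists r, r * dX = p - swapX p.
Proof.
elim/mpolyind: p => [|c m p _ _ [r IH]]; first by exists 0; rewrite comp_mpoly0 mul0r subr0.
have [rX eX] : dX_dvd 'X_[m].
  rewrite mpolyXE_id; apply: big_ind => [|p1 p2|i _]; [exact: dX_dvd1|exact: dX_dvdM|].
  by elim: (m i) => [|e IHe]; rewrite ?expr0 // exprS; apply: dX_dvdM.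
exists (c *: rX + r).
by rewrite comp_mpolyD comp_mpolyZ mulrDl -scalerAl eX IH scalerBr; ring.
Qed.

Lemma divdiffE p : divdiff p * dX = (1 - s) *: ('X_ik1 * (p - swapX p)).
Proof.
have Xvar_ik : Xvar k.-1 = 'X_ik by rewrite /Xvar insubT.
have Xvar_ik1 : Xvar k = 'X_ik1 by rewrite /Xvar insubT.
rewrite /divdiff Xvar_ik Xvar_ik1.
apply: (epsilon_spec (inhabits 0)
  (fun r : Pol => r * dX = (1 - s) *: ('X_ik1 * (p - swapX p)))).
have [r er] := dX_dvd_sub_swapX p.
by exists ((1 - s) *: ('X_ik1 * r)); rewrite -scalerAl -mulrA er.
Qed.

Lemma divdiff_unique p r :
  r * dX = (1 - s) *: ('X_ik1 * (p - swapX p)) -> divdiff p = r.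
Proof. by move=> er; apply: (mulIf dX_neq0); rewrite divdiffE er. Qed.

Lemma divdiff_is_linear a p q : divdiff (a *: p + q) = a *: divdiff p + divdiff q.
Proof.
apply: divdiff_unique.
by rewrite mulrDl -scalerAl !divdiffE comp_mpolyD comp_mpolyZ -!mul_mpolyC; ring.
Qed.

Lemma divdiff0 : divdiff 0 = 0.
Proof. by apply: divdiff_unique; rewrite comp_mpoly0 subrr mulr0 scaler0 mul0r. Qed.

Lemma divdiffD p q : divdiff (p + q) = divdiff p + divdiff q.
Proof. by have := divdiff_is_linear 1 p q; rewrite !scale1r. Qed.

Lemma divdiffZ a p : divdiff (a *: p) = a *: divdiff p.
Proof. by have := divdiff_is_linear a p 0; rewrite !addr0 divdiff0 addr0. Qed.

Lemma divdiff_sum (J : Type) (r : seq J) (P : pred J) (F : J -> Pol) :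
  divdiff (\sum_(j <- r | P j) F j) = \sum_(j <- r | P j) divdiff (F j).
Proof. exact: (big_morph divdiff divdiffD divdiff0). Qed.

Lemma swapX_divdiffE p :
  swapX (divdiff p) * dX = (1 - s) *: ('X_ik * (p - swapX p)).
Proof.
have := congr1 swapX (divdiffE p).
rewrite rmorphM /= swapX_dX comp_mpolyZ rmorphM /= comp_mpolyB swapXK swapX_X tsw_ik1 => e.
by apply: oppr_inj; rewrite -mulrN e -scalerN -mulrN opprB.
Qed.

Lemma swapX_divdiff_add p :
  swapX (divdiff p) + divdiff (swapX p) = (1 - s) *: (p - swapX p).
Proof.
apply: (mulIf dX_neq0).
by rewrite mulrDl swapX_divdiffE divdiffE swapXK /dX -!mul_mpolyC; ring.
Qed.

Lemma divdiffK p : divdiff (divdiff p) = (s - 1) *: divdiff p.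
Proof.
have e : divdiff p - swapX (divdiff p) = (s - 1) *: (p - swapX p).
  apply: (mulIf dX_neq0).
  by rewrite mulrBl swapX_divdiffE divdiffE /dX -!mul_mpolyC; ring.
by apply: divdiff_unique; rewrite e -scalerAl divdiffE -!mul_mpolyC; ring.
Qed.

Section HeckeOperator.
Variables (I : finType) (h : I -> I -> R).
Local Notation Mod := {ffun I -> Pol}.

Definition hecke_op (m : Mod) : Mod :=
  [ffun U => divdiff (m U) + \sum_T h T U *: swapX (m T)].
Definition hecke_opV (m : Mod) : Mod :=
  [ffun U => s^-1 *: (hecke_op m U + (1 - s) *: m U)].

Lemma hecke_opZ c (m : Mod) : hecke_op [ffun U => c *: m U] = [ffun U => c *: hecke_op m U].
Proof.
apply/ffunP => U; rewrite !ffunE divdiffZ scalerDr; congr (_ + _).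
by rewrite scaler_sumr; apply: eq_bigr => T _; rewrite ffunE comp_mpolyZ !scalerA mulrC.
Qed.

Lemma hecke_opVZ c (m : Mod) : hecke_opV [ffun U => c *: m U] = [ffun U => c *: hecke_opV m U].
Proof. by apply/ffunP => U; rewrite /hecke_opV hecke_opZ !ffunE -!mul_mpolyC; ring. Qed.

Hypothesis h_quadratic : forall T, quadratic_at s h T.

Lemma sum_swapX_hecke_op (m : Mod) U :
  \sum_T h T U *: swapX (hecke_op m T) =
  \sum_T h T U *: swapX (divdiff (m T)) + ((s - 1) *: \sum_T h T U *: m T + s *: m U).
Proof.
have -> : \sum_T h T U *: swapX (hecke_op m T) =
    \sum_T h T U *: swapX (divdiff (m T)) + \sum_T h T U *: \sum_T' h T' T *: m T'.
  rewrite -big_split /=; apply: eq_bigr => T _.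
  rewrite ffunE comp_mpolyD raddf_sum scalerDr /=; congr (_ + h T U *: _).
  by apply: eq_bigr => T' _; rewrite comp_mpolyZ swapXK.
congr (_ + _).
have -> : \sum_T h T U *: \sum_T' h T' T *: m T' = \sum_T' (\sum_T h T' T * h T U) *: m T'.
  under eq_bigr do rewrite scaler_sumr.
  rewrite exchange_big /=; apply: eq_bigr => T' _.
  by rewrite scaler_suml; apply: eq_bigr => T _; rewrite scalerA mulrC.
under eq_bigr do rewrite h_quadratic scalerDl -scalerA.
rewrite big_split /= -scaler_sumr; congr (_ + _).
rewrite (bigD1 U) //= eqxx mulr1 big1 ?addr0 // => T' T'_neq.
by rewrite eq_sym (negbTE T'_neq) mulr0 scale0r.
Qed.

Lemma sum_divdiff_swapX (m : Mod) U :
  \sum_T h T U *: divdiff (swapX (m T)) =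
  (1 - s) *: \sum_T h T U *: m T - (1 - s) *: \sum_T h T U *: swapX (m T)
  - \sum_T h T U *: swapX (divdiff (m T)).
Proof.
apply/eqP; rewrite eq_sym subr_eq; apply/eqP.
rewrite -big_split /= !scaler_sumr -sumrB; apply: eq_bigr => T _.
by rewrite -scalerDr (addrC (divdiff _)) swapX_divdiff_add -!mul_mpolyC; ring.
Qed.

Lemma hecke_op_quadratic (m : Mod) U :
  hecke_op (hecke_op m) U = (s - 1) *: hecke_op m U + s *: m U.
Proof.
rewrite !ffunE sum_swapX_hecke_op divdiffD divdiffK divdiff_sum.
under eq_bigr do rewrite divdiffZ.
by rewrite sum_divdiff_swapX -!mul_mpolyC; ring.
Qed.

Hypothesis s_neq0 : s != 0.

Lemma hecke_opK (m : Mod) : hecke_opV (hecke_op m) = m.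
Proof.
apply/ffunP => U; rewrite ffunE hecke_op_quadratic addrAC -scalerDl.
by rewrite (_ : s - 1 + (1 - s) = 0) ?scale0r ?add0r ?scalerA ?mulVf ?scale1r //; ring.
Qed.

End HeckeOperator.
End DividedDifference.
Section Tableaux.
Variable lam : seq nat.
Local Notation tab := (tab N lam).

Lemma cellN_swapf (f : filling N) e : cellN (swapf f k) e = cellN f (tsw k e).
Proof. by rewrite /cellN ffunE. Qed.

Lemma swapfK : involutive (fun f : filling N => swapf f k).
Proof. by move=> f; apply/ffunP => e; rewrite !ffunE; congr (f _); apply: tswK. Qed.

Lemma rowT_k (T : tab) : rowT T k = (cellN (val T) ik).1.
Proof. by rewrite /rowT insubT. Qed.
Lemma rowT_k1 (T : tab) : rowT T k.+1 = (cellN (val T) ik1).1.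
Proof. by rewrite /rowT insubT. Qed.
Lemma colT_k (T : tab) : colT T k = (cellN (val T) ik).2.
Proof. by rewrite /colT insubT. Qed.
Lemma colT_k1 (T : tab) : colT T k.+1 = (cellN (val T) ik1).2.
Proof. by rewrite /colT insubT. Qed.

(* Exchanging k and k+1 can only break monotonicity along a row or a column
   containing both entries. *)
Lemma swapf_rstab (f : filling N) : is_rstab lam f ->
  (cellN f ik).1 != (cellN f ik1).1 -> (cellN f ik).2 != (cellN f ik1).2 ->
  is_rstab lam (swapf f k).
Proof.
move=> f_rstab row_neq col_neq.
have apart (a b : 'I_N) : val (tsw k a) = k -> val (tsw k b) = k.-1 ->
    (cellN f (tsw k a)).1 != (cellN f (tsw k b)).1 /\
    (cellN f (tsw k a)).2 != (cellN f (tsw k b)).2.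
  move=> ea eb; have -> : tsw k a = ik1 by apply: val_inj.
  have -> : tsw k b = ik by apply: val_inj.
  by rewrite eq_sym (eq_sym (cellN f ik1).2).
have kE := prednK k_gt0.
apply/and5P; split.
- apply/forallP => a; apply/forallP => b; apply/implyP; rewrite !cellN_swapf.
  by move=> /eqP /(rstab_cell_inj f_rstab) /(congr1 (tsw k)); rewrite !tswK => ->.
- by apply/forallP => a; rewrite cellN_swapf; exact: rstab_in_shape.
- apply/forallP => r; apply/forallP => c; apply/implyP => rc_in.
  have [e e_rc] := rstab_cell_onto f_rstab rc_in; apply/existsP; exists (tsw k e).
  by rewrite cellN_swapf tswK e_rc.
- apply/forallP => a; apply/forallP => b; apply/implyP; rewrite !cellN_swapf.
  move=> /andP [/eqP e1 e2]; have ba := rstab_row_decr f_rstab e1 e2.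
  have not_kk1 : ~ (val (tsw k a) = k /\ val (tsw k b) = k.-1).
    by case=> ea eb; have [+ _] := apart a b ea eb; rewrite e1 eqxx.
  by move: ba not_kk1 (tsw_cases a) (tsw_cases b) kE; move: (k.-1) => k' /=; lia.
- apply/forallP => a; apply/forallP => b; apply/implyP; rewrite !cellN_swapf.
  move=> /andP [/eqP e1 e2]; have ba := rstab_col_decr f_rstab e1 e2.
  have not_kk1 : ~ (val (tsw k a) = k /\ val (tsw k b) = k.-1).
    by case=> ea eb; have [_ +] := apart a b ea eb; rewrite e1 eqxx.
  by move: ba not_kk1 (tsw_cases a) (tsw_cases b) kE; move: (k.-1) => k' /=; lia.
Qed.

Lemma exists_swapf_tab (T : tab) : rowT T k != rowT T k.+1 -> colT T k != colT T k.+1 ->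
  exists T' : tab, val T' = swapf (val T) k.
Proof.
rewrite rowT_k rowT_k1 colT_k colT_k1 => row_neq col_neq.
by exists (exist (is_rstab lam) _ (swapf_rstab (valP T) row_neq col_neq)).
Qed.

Section SwappedPair.
Variables (T T' : tab).
Hypothesis T'E : val T' = swapf (val T) k.

Lemma swapf_pairE : val T = swapf (val T') k.
Proof. by rewrite T'E swapfK. Qed.

Lemma rowT_swapf_k : rowT T' k = rowT T k.+1.
Proof. by rewrite rowT_k rowT_k1 T'E cellN_swapf tsw_ik. Qed.
Lemma rowT_swapf_k1 : rowT T' k.+1 = rowT T k.
Proof. by rewrite rowT_k rowT_k1 T'E cellN_swapf tsw_ik1. Qed.
Lemma colT_swapf_k : colT T' k = colT T k.+1.
Proof. by rewrite colT_k colT_k1 T'E cellN_swapf tsw_ik. Qed.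
Lemma colT_swapf_k1 : colT T' k.+1 = colT T k.
Proof. by rewrite colT_k colT_k1 T'E cellN_swapf tsw_ik1. Qed.
Lemma CT_swapf_k : CT T' k = CT T k.+1.
Proof. by rewrite /CT rowT_swapf_k colT_swapf_k. Qed.
Lemma CT_swapf_k1 : CT T' k.+1 = CT T k.
Proof. by rewrite /CT rowT_swapf_k1 colT_swapf_k1. Qed.

Lemma swapf_tab_neq : rowT T k != rowT T k.+1 -> T' != T.
Proof. by apply: contraNneq => T'T; rewrite -rowT_swapf_k T'T. Qed.

End SwappedPair.

Hypothesis lam_partition : is_partition N lam.

(* If k+1 lay strictly left of and below k, the cell in the row of k+1 and the
   column of k would hold an entry strictly between k and k+1. *)
Lemma descent_colT_lt (D : tab) :
  (rowT D k.+1 < rowT D k)%N -> colT D k != colT D k.+1 -> (colT D k < colT D k.+1)%N.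
Proof.
rewrite rowT_k rowT_k1 colT_k colT_k1 => row_lt col_neq.
have D_rstab : is_rstab lam (val D) := valP D.
rewrite ltnNge; apply/negP => col_le.
have col_lt : ((cellN (val D) ik1).2 < (cellN (val D) ik).2)%N.
  by rewrite ltn_neqAle eq_sym col_neq.
have /andP [rowk_lt colk_lt] := rstab_in_shape D_rstab ik.
case/and3P: lam_partition => lam_sorted _ _.
have len_le : (nth 0 lam (cellN (val D) ik).1 <= nth 0 lam (cellN (val D) ik1).1)%N.
  apply: (sorted_leq_nth (fun a b c ba cb => leq_trans cb ba) leqnn 0%N lam_sorted).
  - by rewrite inE; apply: ltn_trans rowk_lt.
  - by rewrite inE.
  - exact: ltnW.
have cell_in : in_shape lam (val ((val D) ik1).1, val ((val D) ik).2).
  by rewrite /in_shape /= (ltn_trans row_lt rowk_lt) (leq_trans colk_lt len_le).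
have [e e_cell] := rstab_cell_onto D_rstab cell_in.
have e_lt : (e < ik1)%N by apply: (rstab_row_decr D_rstab); rewrite e_cell.
have e_gt : (ik < e)%N by apply: (rstab_col_decr D_rstab); rewrite e_cell.
by move: e_lt e_gt => /=; have := prednK k_gt0; lia.
Qed.

Lemma content_gap_gt1 (D : tab) :
  (rowT D k.+1 < rowT D k)%N -> colT D k != colT D k.+1 -> (1 < CT D k.+1 - CT D k)%R.
Proof. by move=> row_lt /(descent_colT_lt row_lt); rewrite /CT; lia. Qed.

Lemma hcoef_same_row (T : tab) : rowT T k = rowT T k.+1 ->
  forall U, hcoef k T U = sK * (U == T)%:R.
Proof. by move=> row_eq U; rewrite /hcoef; cbv zeta; rewrite row_eq eqxx if_mul_nat. Qed.

Lemma hcoef_same_col (T : tab) : rowT T k != rowT T k.+1 -> colT T k = colT T k.+1 ->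
  forall U, hcoef k T U = -1 * (U == T)%:R.
Proof.
move=> row_neq col_eq U; rewrite /hcoef; cbv zeta.
by rewrite (negbTE row_neq) col_eq eqxx if_mul_nat.
Qed.

Lemma hcoef_descent (D A : tab) : val A = swapf (val D) k ->
  (rowT D k.+1 < rowT D k)%N -> colT D k != colT D k.+1 ->
  forall U, hcoef k D U = aco (CT D k.+1 - CT D k) * (U == D)%:R
                        + bco (CT D k.+1 - CT D k) * (U == A)%:R.
Proof.
move=> AE row_lt col_neq U; rewrite /hcoef; cbv zeta.
by rewrite (eq_sym (rowT D k)) (ltn_eqF row_lt) (negbTE col_neq) row_lt -AE val_eqE !if_mul_nat.
Qed.

Lemma hcoef_ascent (A D : tab) : val D = swapf (val A) k ->
  rowT A k != rowT A k.+1 -> colT A k != colT A k.+1 -> ~~ (rowT A k.+1 < rowT A k)%N ->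
  forall U, hcoef k A U =
    (sK - 1 - aco (CT A k - CT A k.+1)) * (U == A)%:R
    + ((sK - 1 - aco (CT A k - CT A k.+1)) * aco (CT A k - CT A k.+1) + sK)
        / bco (CT A k - CT A k.+1) * (U == D)%:R.
Proof.
move=> DE row_neq col_neq row_le U; rewrite /hcoef; cbv zeta.
by rewrite (negbTE row_neq) (negbTE col_neq) (negbTE row_le) -DE val_eqE !if_mul_nat.
Qed.

Lemma quadratic_descent (D A : tab) : val A = swapf (val D) k ->
  (rowT D k.+1 < rowT D k)%N -> colT D k != colT D k.+1 ->
  quadratic_at sK (hcoef k) D /\ quadratic_at sK (hcoef k) A.
Proof.
move=> AE row_lt col_neq.
have b_neq0 : bco (CT D k.+1 - CT D k) != 0.
  exact: bcoef_neq0 sK_neq0 sK_expn_neq1 _ (content_gap_gt1 row_lt col_neq).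
have row_neq : rowT D k != rowT D k.+1 by rewrite eq_sym ltn_eqF.
apply: (quadratic_pair (swapf_tab_neq AE row_neq) b_neq0 (hcoef_descent AE row_lt col_neq)).
have row_neqA : rowT A k != rowT A k.+1.
  by rewrite (rowT_swapf_k AE) (rowT_swapf_k1 AE) eq_sym.
have col_neqA : colT A k != colT A k.+1.
  by rewrite (colT_swapf_k AE) (colT_swapf_k1 AE) eq_sym.
have row_leA : ~~ (rowT A k.+1 < rowT A k)%N.
  by rewrite (rowT_swapf_k AE) (rowT_swapf_k1 AE) -leqNgt ltnW.
move=> U; rewrite (hcoef_ascent (swapf_pairE AE) row_neqA col_neqA row_leA).
by rewrite (CT_swapf_k AE) (CT_swapf_k1 AE).
Qed.

Lemma hcoef_quadratic (T : tab) : quadratic_at sK (hcoef k) T.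
Proof.
have [row_eq|row_neq] := eqVneq (rowT T k) (rowT T k.+1).
  by apply: quadratic_diagonal (hcoef_same_row row_eq) _; ring.
have [col_eq|col_neq] := eqVneq (colT T k) (colT T k.+1).
  by apply: quadratic_diagonal (hcoef_same_col row_neq col_eq) _; ring.
have [T' T'E] := exists_swapf_tab row_neq col_neq.
have [row_lt|row_ge] := ltnP (rowT T k.+1) (rowT T k).
  by case: (quadratic_descent T'E row_lt col_neq).
have row_ltT' : (rowT T' k.+1 < rowT T' k)%N.
  by rewrite (rowT_swapf_k T'E) (rowT_swapf_k1 T'E) ltn_neqAle row_neq.
have col_neqT' : colT T' k != colT T' k.+1.
  by rewrite (colT_swapf_k T'E) (colT_swapf_k1 T'E) eq_sym.
by case: (quadratic_descent (swapf_pairE T'E) row_ltT' col_neqT').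
Qed.

Lemma liftV_heckeV (m : Mod N lam) U :
  liftV (heckeV k) m U = \sum_T hcoef k T U *: m T.
Proof.
rewrite ffunE; apply: eq_bigr => T _; rewrite ffunE.
under eq_bigr do rewrite ffunE.
by rewrite sum_delta_mul.
Qed.

Lemma bT_hecke_op (m : Mod N lam) : bT k m = hecke_op sK (hcoef k) m.
Proof.
apply/ffunP => U; rewrite [LHS]ffunE [RHS]ffunE liftV_heckeV; congr (_ + _).
by apply: eq_bigr => T _; rewrite ffunE.
Qed.

Lemma bTinv_hecke_opV (m : Mod N lam) : bTinv k m = hecke_opV sK (hcoef k) m.
Proof. by rewrite /bTinv bT_hecke_op. Qed.

Lemma bTK (m : Mod N lam) : bTinv k (bT k m) = m.
Proof. by rewrite bTinv_hecke_opV bT_hecke_op (hecke_opK hcoef_quadratic sK_neq0). Qed.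

Lemma bTinvZ c (m : Mod N lam) : bTinv k (scaleM c m) = scaleM c (bTinv k m).
Proof. by rewrite !bTinv_hecke_opV hecke_opVZ. Qed.

End Tableaux.
End Adjacent.

Section Composites.
Variables (N : nat) (lam : seq nat).
Hypotheses (N_gt1 : (1 < N)%N) (lam_partition : is_partition N lam).
Local Notation Mod := (Mod N lam).

Lemma mulxNZ c (m : Mod) : mulxN (scaleM c m) = scaleM c (mulxN m).
Proof. by apply/ffunP => U; rewrite !ffunE scalerAr. Qed.

Lemma scaleM_scaleM a b (m : Mod) : scaleM a (scaleM b m) = scaleM (a * b) m.
Proof. by apply/ffunP => U; rewrite !ffunE scalerA. Qed.

Lemma scale1M (m : Mod) : scaleM 1 m = m.
Proof. by apply/ffunP => U; rewrite !ffunE scale1r. Qed.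

Lemma foldl_bTinvZ (l : seq nat) c (m : Mod) : all (fun k => 0 < k < N)%N l ->
  foldl (fun m k => bTinv k m) (scaleM c m) l = scaleM c (foldl (fun m k => bTinv k m) m l).
Proof.
elim: l m => [|k l IHl] m //= /andP [/andP [k_gt0 k_ltN] l_adj].
by rewrite bTinvZ // IHl.
Qed.

Lemma foldl_bTinv_bT (l : seq nat) c (m : Mod) : all (fun k => 0 < k < N)%N l ->
  foldl (fun m k => bTinv k m) (scaleM c (foldl (fun m k => bT k m) m (rev l))) l =
  scaleM c m.
Proof.
elim: l m => [|k l IHl] m //= /andP [/andP [k_gt0 k_ltN] l_adj].
by rewrite rev_cons foldl_rcons bTinvZ // bTK // IHl.
Qed.

Lemma iota_adjacent : all (fun k => 0 < k < N)%N (iota 1 N.-1).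
Proof.
apply/allP => k; rewrite mem_iota => /andP [k_gt0 k_lt].
by rewrite k_gt0 /=; move: k_lt; rewrite add1n prednK //; lia.
Qed.

Lemma PhiZ c (m : Mod) : Phi (scaleM c m) = scaleM c (Phi m).
Proof. by rewrite /Phi foldl_bTinvZ ?iota_adjacent // mulxNZ. Qed.

Lemma Phi'_Xi1 (m : Mod) : Phi' m = scaleM (sK ^+ N.-1) (Phi (Xi 1 m)).
Proof.
have XiE : Xi 1 m = scaleM (sK ^ (1 - N%:Z)) (foldl (fun m k => bT k m) (bw m) (rev (iota 1 N.-1))).
  by rewrite /Xi subn1.
rewrite XiE /Phi foldl_bTinv_bT ?iota_adjacent // mulxNZ scaleM_scaleM.
have -> : (1 - N%:Z = - (N.-1)%:Z)%R by rewrite predn_int; [ring | lia].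
by rewrite -exprnN mulfV ?expf_neq0 ?sK_neq0 // scale1M.
Qed.

End Composites.

Theorem proposition4p1 (N : nat) (lam : seq nat) :
  (2 <= N)%N -> is_partition N lam ->
  (forall m : Mod N lam, Phi' m = scaleM (sK ^+ N.-1) (Phi (Xi 1 m))) /\
  (forall (v : 'I_N -> nat) (T : tab N lam) (P : Mod N lam),
     (forall i : 'I_N, Xi i.+1 P = scaleM (qK ^+ v i * sK ^ CT T (rv v i.+1)) P) ->
     Phi' P = scaleM (sK ^ ((N.-1)%:Z + CT T (rv v 1)) * qK ^+ vnat v 0) (Phi P)).
Proof.
move=> N_gt1 lam_partition; split=> [m|v T P XiP]; first exact: Phi'_Xi1.
have N_gt0 : (0 < N)%N by lia.
have Xi1P : Xi 1 P = scaleM (qK ^+ v (Ordinal N_gt0) * sK ^ CT T (rv v 1)) P := XiP (Ordinal N_gt0).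
have -> : vnat v 0 = v (Ordinal N_gt0) by rewrite /vnat insubT.
rewrite (Phi'_Xi1 N_gt1 lam_partition) Xi1P (PhiZ N_gt1 lam_partition) scaleM_scaleM.
by rewrite (expfzDr (N.-1)%:Z (CT T (rv v 1)) sK_neq0) mulrCA mulrC.
Qed.
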